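(* Assume (R), and let $(\mathbb P^n)_{n\ge1}\subset\mathcal P$ satisfy $\sup_nJ(\mathbb P^n)<\infty$. Define $\lambda_1^n(t):=\frac1d\mathrm{tr}(\bar\Sigma_2(t,X_t)^{-1}\Sigma^{\mathbb P^n}_t)$. Then $\sup_{n\ge1}\mathbb E^{\mathbb P^n}[\int_0^1\lambda_1^n(t)\log\lambda_1^n(t)\,dt]<\infty$ (convention $0\log0=0$).
   Context: $\Omega=C([0,1];\mathbb R^d)$, canonical process $X$. $\mathcal P$ is the set of probability measures $\mathbb P$ on $\Omega$ under which $X$ is a continuous local martingale with $\langle X\rangle_t=\int_0^t\Sigma^{\mathbb P}_sds$, $\Sigma^{\mathbb P}$ progressively measurable with values in $\mathbb S^d_+$. Continuous $\lambda_2:[0,1]\times\mathbb R^d\to(0,\infty)$, $\bar\Sigma_2:[0,1]\times\mathbb R^d\to\mathbb S^d_{++}$; (R): $\underline b\le\lambda_2\le\overline b$ and $\bar\Sigma_2\preceq MI_d$ for constants $0<\underline b\le\overline b$, $M>0$. For $\Sigma_1\in\mathbb S^d_+$, $\lambda_1:=\frac1d\mathrm{tr}(\bar\Sigma_2(t,x)^{-1}\Sigma_1)$, $\bar\Sigma_1:=\Sigma_1/\lambda_1$ if $\Sigma_1\ne0$; $\ell^{\mathrm{tr}}(t,x,\Sigma_1)=\lambda_1\log\frac{\lambda_1}{\lambda_2}-\lambda_1+\lambda_2-\frac{\lambda_1}2\log\det(\bar\Sigma_2^{-1}\bar\Sigma_1)$ on $\mathbb S^d_{++}$, $=\lambda_2(t,x)$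 at $\Sigma_1=0$, $=+\infty$ on singular nonzero $\Sigma_1$. $\xi:C([0,1];\mathbb R^d)\to\mathbb R$ bounded Borel, continuous for the uniform topology; $J(\mathbb P)=\mathbb E^{\mathbb P}[\int_0^1\ell^{\mathrm{tr}}(t,X_t,\Sigma^{\mathbb P}_t)dt+\xi(X)]$. *)

From HB Require Import structures.
From mathcomp Require Import all_boot all_order all_algebra.
From mathcomp Require Import all_classical all_reals all_analysis.
Set Implicit Arguments. Unset Strict Implicit. Unset Printing Implicit Defensive.
Import Order.TTheory GRing.Theory Num.Theory.
Import numFieldNormedType.Exports.
Local Open Scope classical_set_scope.
Local Open Scope ring_scope.

(* only its values on [0,1] are ever used.              *)
Record cpath (R : realType) (d : nat) := CPath {
  pval : R -> 'rV[R]_d ;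
  pcont : {within `[0%R, 1%R], continuous pval} }.

HB.instance Definition _ (R : realType) d := gen_eqMixin (cpath R d).
HB.instance Definition _ (R : realType) d := gen_choiceMixin (cpath R d).

Lemma const_path_cont (R : realType) d :
  {within `[0%R, 1%R], continuous (fun _ : R => (0 : 'rV[R]_d))}.
Proof. by apply: continuous_subspaceT => x; exact: cvg_cst. Qed.

HB.instance Definition _ (R : realType) d :=
  isPointed.Build (cpath R d) (CPath (@const_path_cont R d)).

Definition coord (R : realType) d (s : R) (i : 'I_d) (w : cpath R d) : R :=
  pval w s ord0 i.

Definition Gcyl (R : realType) d (t : R) : set (set (cpath R d)) :=
  [set A | exists s (i : 'I_d) (B : set R),
     [/\ 0 <= s <= t, measurable B & A = coord s i @^-1` B]].

(* Omega with the Borel sigma-algebra of the uniform topology, i.e. the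
   sigma-algebra generated by the coordinate maps (times in [0,1]). *)
Definition Omega (R : realType) d := g_sigma_algebraType (@Gcyl R d 1).
HB.instance Definition _ (R : realType) d :=
  Measurable.copy (Omega R d) (g_sigma_algebraType (@Gcyl R d 1)).

Definition Xp (R : realType) d (t : R) (w : Omega R d) : 'rV[R]_d := pval w t.

Definition Filt (R : realType) d (t : R) : set (set (Omega R d)) :=
  <<s @Gcyl R d t >>.

Definition Fmeas (R : realType) d (t : R) (f : Omega R d -> R) :=
  forall B : set R, measurable B -> Filt t (f @^-1` B).

Section Processes.
Context (R : realType) (d : nat).
Local Notation Om := (Omega R d).

Definition stopping_time (tau : Om -> R) :=
  (forall w, 0 <= tau w <= 1) /\
  (forall t, 0 <= t <= 1 -> Filt t [set w | tau w <= t]).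

Definition martingale (P : probability Om R) (M : R -> Om -> R) :=
  (forall t, 0 <= t <= 1 -> Fmeas t (M t) /\ P.-integrable setT (EFin \o M t)) /\
  (forall s t (A : set Om), 0 <= s -> s <= t -> t <= 1 -> Filt s A ->
     (\int[P]_(w in A) (M t w)%:E = \int[P]_(w in A) (M s w)%:E)%E).

Definition cont_local_martingale (P : probability Om R) (M : R -> Om -> R) :=
  (forall w, {within `[0%R, 1%R], continuous (fun t => M t w)}) /\
  exists tau : nat -> Om -> R,
    [/\ forall k, stopping_time (tau k),
        forall k w, tau k w <= tau k.+1 w,
        {ae P, forall w, exists k, tau k w = 1} &
        forall k, martingale P (fun t w => M (Num.min t (tau k w)) w - M 0 w)].

Definition prog_rect (t : R) : set (set (R * Om)) :=
  [set C | exists (A : set R) (B : set Om),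
     [/\ measurable A, A `<=` `[0%R, t], Filt t B & C = A `*` B]].

Definition progressive (S : R -> Om -> 'M[R]_d) :=
  forall t, 0 <= t <= 1 -> forall (i j : 'I_d) (B : set R), measurable B ->
    <<s prog_rect t >> [set p : R * Om | 0 <= p.1 <= t /\ B (S p.1 p.2 i j)].

End Processes.

Definition psd (R : realType) n (A : 'M[R]_n) :=
  A^T = A /\ forall v : 'rV[R]_n, 0 <= (v *m A *m v^T) ord0 ord0.
Definition pd (R : realType) n (A : 'M[R]_n) :=
  A^T = A /\ forall v : 'rV[R]_n, v != 0 -> 0 < (v *m A *m v^T) ord0 ord0.

(* The class \mathcal P, with Sigma the density of <X> *)
Definition inPclass (R : realType) d (P : probability (Omega R d) R)
    (Sig : R -> Omega R d -> 'M[R]_d) :=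
  [/\ progressive Sig,
      forall t w, 0 <= t <= 1 -> psd (Sig t w),
      forall i : 'I_d, cont_local_martingale P (fun t w => Xp t w ord0 i) &
      exists Q : 'I_d -> 'I_d -> R -> Omega R d -> R,
        forall i j : 'I_d,
          cont_local_martingale P
            (fun t w => Xp t w ord0 i * Xp t w ord0 j - Q i j t w) /\
          {ae P, forall w, forall t, 0 <= t <= 1 ->
             (@lebesgue_measure R).-integrable `[0%R, t] (fun s => (Sig s w i j)%:E) /\
             (Q i j t w)%:E = (\int[@lebesgue_measure R]_(s in `[0%R, t]) (Sig s w i j)%:E)%E}].

Definition lam1 (R : realType) d (S2 S1 : 'M[R]_d) : R :=
  d%:R^-1 * \tr (invmx S2 *m S1).

(* the cost l^tr(t,x,Sigma1), given lambda2 = lam2 and Sbar2 = S2 at (t,x) *)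
Definition ell_tr (R : realType) d (lam2 : R) (S2 S1 : 'M[R]_d) : \bar R :=
  if S1 == 0 then lam2%:E
  else if S1 \in unitmx then
    let l1 := lam1 S2 S1 in
    let S1b := l1^-1 *: S1 in
    (l1 * ln (l1 / lam2) - l1 + lam2 - l1 / 2 * ln (\det (invmx S2 *m S1b)))%:E
  else +oo%E.

Definition xlogx (R : realType) (x : R) : R := if x == 0 then 0 else x * ln x.

Definition Jcost (R : realType) d (lam2 : R -> 'rV[R]_d -> R)
    (S2 : R -> 'rV[R]_d -> 'M[R]_d) (xi : Omega R d -> R)
    (P : probability (Omega R d) R) (Sig : R -> Omega R d -> 'M[R]_d) : \bar R :=
  (\int[P]_w
     (\int[@lebesgue_measure R]_(t in `[0%R, 1%R])
         ell_tr (lam2 t (Xp t w)) (S2 t (Xp t w)) (Sig t w)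
      + (xi w)%:E))%E.

(* The eigenvalues of Sbar2^-1 Sigma1 are real and nonnegative (a positive
   definite matrix inverse times a positive semidefinite one), so by AM-GM
   det (Sbar2^-1 Sigma1) <= (tr (Sbar2^-1 Sigma1) / d)^d.  Once Sigma1 is
   normalised by lambda1 this makes the log-det term of l^tr nonnegative, hence
   l^tr dominates the relative entropy
   lambda1 log (lambda1 / lambda2) - lambda1 + lambda2
     >= lambda1 log lambda1 - (log bu + 1) lambda1.
   Since x log x - 2 a x >= - e^(2a - 1), this gives pointwise
   lambda1 log lambda1 <= 2 l^tr + e^(2 (log bu + 1) - 1); integrating in t and
   then under P^n, with |xi| <= K, bounds the expectation by
   2 (sup_n J(P^n) + 2 K) + e^(2 (log bu + 1) - 1). *)

From HB Require Import structures.
From mathcomp Require Import all_boot all_order all_algebra.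
From mathcomp Require Import all_classical all_reals all_analysis.
From mathcomp Require Import spectral.
From mathcomp.real_closed Require Import complex.
From mathcomp.algebra_tactics Require Import ring lra.
Import Order.TTheory GRing.Theory Num.Theory.
Import numFieldNormedType.Exports.
Import HBSimple HBNNSimple.
Local Open Scope classical_set_scope.
Local Open Scope ring_scope.
Set Implicit Arguments. Unset Strict Implicit. Unset Printing Implicit Defensive.

Section entropy_inequalities.
Variable R : realType.
Implicit Types x y a b : R.

Lemma ln_le_subr1 y : 0 < y -> ln y <= y - 1.
Proof.
move=> y0; have := @le_ln1Dx R (y - 1).
by rewrite addrCA subrr addr0; apply; rewrite ltrBrDl; lra.
Qed.

(* [x ln x - a x] is minimal at [x = expR (a - 1)]. *)
Lemma xlnx_sub_linear_ge a x : 0 < x -> - expR (a - 1) <= x * ln x - a * x.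
Proof.
move=> x0; set e := expR (a - 1).
have e0 : 0 < e by exact: expR_gt0.
have := ln_le_subr1 (divr_gt0 e0 x0); rewrite ln_div ?posrE // expRK.
have xe : x * (e / x) = e by rewrite mulrC divfK ?gt_eqF.
move: xe; set z := e / x; set l := ln x => xe lnz.
have h : 0 <= (z - 1) - (a - 1 - l) by rewrite subr_ge0.
by have := mulr_ge0 (ltW x0) h; rewrite !mulrBr xe; lra.
Qed.

Lemma xlogx_le_twice_sub_linear a x : 0 <= x ->
  xlogx x <= 2 * (xlogx x - a * x) + expR (2 * a - 1).
Proof.
have e0 := expR_gt0 (2 * a - 1).
rewrite le_eqVlt => /predU1P[<-|x0]; first by rewrite /xlogx eqxx; lra.
rewrite /xlogx gt_eqF //; have := xlnx_sub_linear_ge (2 * a) x0; lra.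
Qed.

Lemma relative_entropy_ge_xlogx x y b : 0 <= x -> 0 < y -> y <= b ->
  xlogx x - (ln b + 1) * x <= x * ln (x / y) - x + y.
Proof.
rewrite le_eqVlt => /predU1P[<-|x0] y0 yb; first by rewrite /xlogx eqxx; lra.
have lnyb : ln y <= ln b by rewrite ler_ln ?posrE //; exact: lt_le_trans yb.
rewrite /xlogx gt_eqF // ln_div ?posrE //.
have : 0 <= x * (ln b - ln y) by rewrite mulr_ge0 ?subr_ge0 // ltW.
lra.
Qed.

Lemma relative_entropy_ge0 x y : 0 <= x -> 0 < y -> 0 <= x * ln (x / y) - x + y.
Proof.
rewrite le_eqVlt => /predU1P[<-|x0] y0; first by rewrite mul0r; lra.
have := ln_le_subr1 (divr_gt0 y0 x0); rewrite !ln_div ?posrE // => lnyx.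
have xyx : x * (y / x) = y by rewrite mulrC divfK ?gt_eqF.
move: xyx lnyx; set z := y / x => xyx lnyx.
have h : 0 <= (z - 1) - (ln y - ln x) by rewrite subr_ge0.
by have := mulr_ge0 (ltW x0) h; rewrite !mulrBr xyx; lra.
Qed.

End entropy_inequalities.

Section psd_spectrum.
Variable R : realType.
Local Notation C := R[i].
Local Notation Re := (@complex.Re R).
Local Notation Im := (@complex.Im R).
Local Notation toC M := (map_mx (real_complex R) M).
Local Open Scope complex_scope.

Lemma Re_sum I (r : seq I) (P : pred I) (F : I -> C) :
  Re (\sum_(i <- r | P i) F i) = \sum_(i <- r | P i) Re (F i).
Proof. by apply: (big_morph _ _ (erefl : Re 0 = 0)) => -[a b] [c e]. Qed.

Lemma Im_sum I (r : seq I) (P : pred I) (F : I -> C) :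
  Im (\sum_(i <- r | P i) F i) = \sum_(i <- r | P i) Im (F i).
Proof. by apply: (big_morph _ _ (erefl : Im 0 = 0)) => -[a b] [c e]. Qed.

Definition qform n (M : 'M[R]_n) (u v : 'rV[R]_n) := (u *m M *m v^T) ord0 ord0.

Lemma qformC n (M : 'M[R]_n) u v : M^T = M -> qform M u v = qform M v u.
Proof.
move=> sM; transitivity ((u *m M *m v^T)^T ord0 ord0); first by rewrite mxE.
by rewrite !trmx_mul trmxK sM mulmxA.
Qed.

Lemma qform_lincomb n (A B : 'M[R]_n) p q w a b :
  p *m B = a *: (p *m A) + b *: (q *m A) ->
  qform B p w = a * qform A p w + b * qform A q w.
Proof. by rewrite /qform => ->; rewrite mulmxDl -!scalemxAl !mxE. Qed.

Lemma pd_unitmx n (A : 'M[R]_n) : pd A -> A \in unitmx.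
Proof.
case=> _ pA; rewrite unitmxE unitfE; apply/negP => /det0P [v v0 vA].
by have := pA v v0; rewrite vA mul0mx mxE ltxx.
Qed.

Lemma pd_psd n (A : 'M[R]_n) : pd A -> psd A.
Proof.
case=> sA pA; split=> // v; have [->|v0] := eqVneq v 0; last exact/ltW/pA.
by rewrite !mul0mx mxE.
Qed.

Lemma eigen_toC_ReIm n (N : 'M[R]_n) (mu : C) (v : 'rV[C]_n) :
  v *m toC N = mu *: v ->
  map_mx Re v *m N = Re mu *: map_mx Re v - Im mu *: map_mx Im v /\
  map_mx Im v *m N = Im mu *: map_mx Re v + Re mu *: map_mx Im v.
Proof.
case: mu => a b hv; split; apply/rowP => j.
  have := congr1 (fun M : 'rV[C]_n => Re (M ord0 j)) hv.
  rewrite !mxE Re_sum; case: (v ord0 j) => c e /= <-.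
  apply: eq_bigr => k _.
  by rewrite !mxE; case: (v _ _) => x y /=; rewrite mulr0 subr0.
have := congr1 (fun M : 'rV[C]_n => Im (M ord0 j)) hv.
rewrite !mxE Im_sum; case: (v ord0 j) => c e /=; rewrite [_ + a * e]addrC => <-.
apply: eq_bigr => k _.
by rewrite !mxE; case: (v _ _) => x y /=; rewrite mulr0 add0r.
Qed.

(* With [v = x + i y], [p = x A^-1], [q = y A^-1] and [mu = a + i b], the
   eigen-equation reads [p B = a p A - b q A] and [q B = a q A + b p A];
   pairing with [p] and [q] and using the symmetry of [A] and [B] gives
   [b (pAp + qAq) = 0] and [a (pAp + qAq) = pBp + qBq]. *)
Lemma eigenvalue_invmx_mul_psd n (A B : 'M[R]_n) (mu : C) (v : 'rV[C]_n) :
  pd A -> psd B -> v != 0 -> v *m toC (invmx A *m B) = mu *: v ->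
  Im mu = 0 /\ 0 <= Re mu.
Proof.
move=> pdA [sB psdB] v0 /eigen_toC_ReIm[].
set x := map_mx Re v; set y := map_mx Im v; set a := Re mu; set b := Im mu.
move=> hx hy; have Au := pd_unitmx pdA.
pose p := x *m invmx A; pose q := y *m invmx A.
have pA : p *m A = x by rewrite mulmxKV.
have qA : q *m A = y by rewrite mulmxKV.
have hp : p *m B = a *: (p *m A) + (- b) *: (q *m A).
  by rewrite pA qA scaleNr -hx mulmxA.
have hq : q *m B = a *: (q *m A) + b *: (p *m A).
  by rewrite pA qA addrC -hy mulmxA.
have pq_pos : 0 < qform A p p + qform A q q.
  have Age0 := (pd_psd pdA).2.
  have [p0|/pdA.2 Ap] := eqVneq p 0; last by rewrite ltr_wpDr ?Age0.
  have [q0|/pdA.2 Aq] := eqVneq q 0; last by rewrite ltr_wpDl ?Age0.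
  case/eqP: v0; apply/rowP => j.
  have := congr1 (fun M : 'rV[R]_n => M ord0 j) pA.
  have := congr1 (fun M : 'rV[R]_n => M ord0 j) qA.
  by rewrite p0 q0 !mul0mx !mxE; case: (v ord0 j) => c e /= <- <-.
have := qform_lincomb p hp; have := qform_lincomb q hq.
have := qform_lincomb q hp; have := qform_lincomb p hq.
rewrite (qformC q p sB) (qformC q p pdA.1).
move: (psdB p) (psdB q) pq_pos; rewrite -!/(qform _ _ _).
move: (qform A p p) (qform A q q) (qform A p q) => App Aqq Apq.
move: (qform B p p) (qform B q q) (qform B p q) => Bpp Bqq Bpq.
move=> Bpp0 Bqq0 S0 e1 e2 e3 e4.
have b0 : b = 0.
  have : b * (App + Aqq) = 0 by lra.
  by move/eqP; rewrite mulf_eq0 (gt_eqF S0) orbF => /eqP.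
by split=> //; rewrite b0 in e3 e4; nra.
Qed.

Lemma invmx_mul_psd_spectrum n (A B : 'M[R]_n) : (0 < n)%N -> pd A -> psd B ->
  exists2 r : 'I_n -> R, forall i, 0 <= r i &
    \det (invmx A *m B) = \prod_i r i /\ \tr (invmx A *m B) = \sum_i r i.
Proof.
move=> n_gt0 pdA psdB; set N := invmx A *m B.
have [P /unitarymx_unit Pu] := Schur (toC N) n_gt0.
rewrite /similar_to conjumx //; set T := P *m toC N *m invmx P => Ttrig.
have Tii_eigen i : eigenvalue (toC N) (T i i).
  have PNu : stablemx P (toC N) by exact: stablemx_unit.
  apply: (eigenvalue_conjmx PNu); first by rewrite row_free_unit.
  rewrite conjumx // [_ \in _]eigenvalue_root_char char_poly_trig //.
  rewrite /root horner_prod.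
  by apply/prodf_eq0; exists i => //; rewrite hornerXsubC subrr.
have Tii_real i : T i i = (Re (T i i))%:C /\ 0 <= Re (T i i).
  have [w Nw w0] := eigenvalueP (Tii_eigen i).
  have [Im0 Re_ge0] := eigenvalue_invmx_mul_psd pdA psdB w0 Nw.
  by split=> //; move: Im0; case: (T i i) => a b /= ->.
exists (fun i => Re (T i i)) => [i|]; first exact: (Tii_real i).2.
have detP : \det P != 0 by rewrite -unitfE -unitmxE.
split; apply: (@complexI R).
- rewrite rmorph_prod -det_map_mx; transitivity (\det T).
    by rewrite /T !det_mulmx det_inv mulrAC divff ?mul1r.
  by rewrite det_trig //; apply: eq_bigr => i _; exact: (Tii_real i).1.
- rewrite -(trace_map_mx (real_complex R)) rmorph_sum; transitivity (\tr T).
    by rewrite /T mxtrace_mulC mulmxA mulVmx ?mul1mx.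
  by apply: eq_bigr => i _; exact: (Tii_real i).1.
Qed.

End psd_spectrum.

Section ell_tr_bounds.
Variables (R : realType) (n : nat).
Hypothesis n_gt0 : (0 < n)%N.

Lemma det_invmx_mul_psd_le_AGM (S2 S1 : 'M[R]_n) : pd S2 -> psd S1 ->
  \det (invmx S2 *m S1) <= (\tr (invmx S2 *m S1) / n%:R) ^+ n.
Proof.
move=> pdS2 psdS1.
have [r r_ge0 [-> ->]] := invmx_mul_psd_spectrum n_gt0 pdS2 psdS1.
have := @leif_AGM _ _ (predT : {pred 'I_n}) r; rewrite card_ord.
by move=> /(_ (fun i _ => r_ge0 i)) [].
Qed.

Lemma lam1_ge0 (S2 S1 : 'M[R]_n) : pd S2 -> psd S1 -> 0 <= lam1 S2 S1.
Proof.
move=> pdS2 psdS1; rewrite /lam1.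
have [r r_ge0 [_ ->]] := invmx_mul_psd_spectrum n_gt0 pdS2 psdS1.
by rewrite mulr_ge0 ?invr_ge0 ?ler0n ?sumr_ge0.
Qed.

Lemma lam1_gt0 (S2 S1 : 'M[R]_n) :
  pd S2 -> psd S1 -> S1 \in unitmx -> 0 < lam1 S2 S1.
Proof.
move=> pdS2 psdS1 S1u; rewrite /lam1 mulr_gt0 ?invr_gt0 ?ltr0n //.
have [r r_ge0 [detE ->]] := invmx_mul_psd_spectrum n_gt0 pdS2 psdS1.
have : \det (invmx S2 *m S1) != 0.
  by rewrite -unitfE -unitmxE unitmx_mul unitmx_inv pd_unitmx.
rewrite detE => /prodf_neq0 r_neq0.
have r_gt0 i : 0 < r i by rewrite lt_def r_neq0 ?r_ge0.
by rewrite (bigD1 (Ordinal n_gt0)) //= ltr_wpDr ?sumr_ge0 // => i _; exact: ltW.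
Qed.

(* AM-GM gives [det N <= (tr N / n)^n] for [N = S2^-1 S1], and dividing [S1] by
   [lam1 S2 S1] makes [tr N / n = 1]. *)
Lemma ln_det_lam1_normalized_le0 (S2 S1 : 'M[R]_n) :
  pd S2 -> psd S1 -> S1 \in unitmx ->
  ln (\det (invmx S2 *m ((lam1 S2 S1)^-1 *: S1))) <= 0.
Proof.
move=> pdS2 psdS1 S1u; have l_gt0 := lam1_gt0 pdS2 psdS1 S1u.
apply: ln_le0; rewrite -scalemxAr detZ exprVn ler_pdivrMl ?exprn_gt0 // mulr1.
by rewrite /lam1 mulrC; exact: det_invmx_mul_psd_le_AGM.
Qed.

Lemma ell_tr_ge_relative_entropy (lam2 : R) (S2 S1 : 'M[R]_n) : pd S2 -> psd S1 ->
  ((lam1 S2 S1 * ln (lam1 S2 S1 / lam2) - lam1 S2 S1 + lam2)%:E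
     <= ell_tr lam2 S2 S1)%E.
Proof.
move=> pdS2 psdS1; rewrite /ell_tr.
have [->|S1_neq0] := eqVneq S1 0.
  by rewrite /lam1 mulmx0 mxtrace0 mulr0 !mul0r subr0 add0r.
case: ifP => S1u; last by rewrite leey.
rewrite lee_fin /= lerDl oppr_ge0 mulr_ge0_le0 ?ln_det_lam1_normalized_le0 //.
by rewrite divr_ge0 ?lam1_ge0.
Qed.

Lemma ell_tr_ge0 (lam2 : R) (S2 S1 : 'M[R]_n) :
  0 < lam2 -> pd S2 -> psd S1 -> (0 <= ell_tr lam2 S2 S1)%E.
Proof.
move=> lam2_gt0 pdS2 psdS1; apply: le_trans (ell_tr_ge_relative_entropy _ pdS2 psdS1).
by rewrite lee_fin relative_entropy_ge0 ?lam1_ge0.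
Qed.

Lemma xlogx_lam1_le_ell_tr (lam2 bu : R) (S2 S1 : 'M[R]_n) :
  0 < lam2 -> lam2 <= bu -> pd S2 -> psd S1 ->
  ((xlogx (lam1 S2 S1))%:E
     <= 2%:E * ell_tr lam2 S2 S1 + (expR (2 * (ln bu + 1) - 1))%:E)%E.
Proof.
move=> lam2_gt0 lam2_le pdS2 psdS1; have l_ge0 := lam1_ge0 pdS2 psdS1.
apply: le_trans (_ : ((2 * (xlogx (lam1 S2 S1) - (ln bu + 1) * lam1 S2 S1)
   + expR (2 * (ln bu + 1) - 1))%:E <= _)%E).
  by rewrite lee_fin xlogx_le_twice_sub_linear.
rewrite EFinD EFinM leeD2r // lee_wpmul2l ?lee_fin //.
apply: le_trans (ell_tr_ge_relative_entropy _ pdS2 psdS1).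
by rewrite lee_fin relative_entropy_ge_xlogx.
Qed.

End ell_tr_bounds.

Section nnsfun_subr_max.
Context d (T : measurableType d) (R : realType) (h c : {nnsfun T >-> R}).

Let maxBc_ge0 : @isNonNegFun T R (max_nnsfun h c \- c).
Proof. by split=> x /=; rewrite subr_ge0 le_max lexx orbT. Qed.
#[local] HB.instance Definition _ := maxBc_ge0.

Definition subr_max_nnsfun : {nnsfun T >-> R} := max_nnsfun h c \- c.

End nnsfun_subr_max.

(* The integral of a nonnegative function is the supremum of the integrals of
   the simple functions below it, so none of the comparisons below needs
   measurability of the integrands. *)
Section integral_le_nonmeasurable.
Local Open Scope ereal_scope.
Context d (T : measurableType d) (R : realType) (mu : {measure set T -> \bar R}).
Implicit Types (D : set T) (f g : T -> \bar R).

Lemma ge0_le_integral_nomeas D f g :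
  (forall x, D x -> 0 <= f x) -> (forall x, D x -> f x <= g x) ->
  \int[mu]_(x in D) f x <= \int[mu]_(x in D) g x.
Proof.
move=> f0 fg.
have g0 x : D x -> 0 <= g x by move=> Dx; exact: le_trans (f0 x Dx) (fg x Dx).
rewrite (ge0_integralE _ f0) (ge0_integralE _ g0).
apply: ereal_sup_le => _ [h /= hf <-]; exists h => //= x.
apply: le_trans (hf x) _; rewrite /patch; case: ifP => // /set_mem Dx.
exact: fg.
Qed.

Lemma le_integral_nomeas D f g : (forall x, D x -> f x <= g x) ->
  \int[mu]_(x in D) f x <= \int[mu]_(x in D) g x.
Proof.
move=> fg; rewrite (integralE _ _ f) (integralE _ _ g); apply: leeB.
  apply: ge0_le_integral_nomeas => x Dx; first exact: funepos_ge0.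
  by apply: (@funepos_le _ _ D) => //; [move=> y /set_mem /fg | rewrite inE].
apply: ge0_le_integral_nomeas => x Dx; first exact: funeneg_ge0.
by apply: (@funeneg_le _ _ D) => //; [move=> y /set_mem /fg | rewrite inE].
Qed.

(* A simple [h <= a f + B 1_D] splits as [(max h (B 1_D) - B 1_D) + B 1_D],
   whose first summand is at most [a f]. *)
Lemma ge0_integral_affine_le D (mD : measurable D) f (a B : R) :
  (0 < a)%R -> (0 <= B)%R -> (forall x, D x -> 0 <= f x) ->
  \int[mu]_(x in D) (a%:E * f x + B%:E) <= a%:E * \int[mu]_(x in D) f x + B%:E * mu D.
Proof.
move=> a_gt0 B0 f0.
have F0 x : D x -> 0 <= a%:E * f x + B%:E.
  by move=> Dx; rewrite adde_ge0 ?mule_ge0 ?f0 ?lee_fin // ltW.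
rewrite (ge0_integralE _ F0); apply: ge_ereal_sup => _ [h /= h_le <-].
pose c := scale_nnsfun (indic_nnsfun R mD) B0.
have intc : sintegral mu c = B%:E * mu D by rewrite sintegralrM sintegral_indic.
have hD x : D x -> (h x)%:E <= a%:E * f x + B%:E.
  by move=> Dx; have := h_le x; rewrite /patch mem_set.
have hnD x : ~ D x -> h x = 0%R.
  move=> nDx; have := h_le x; rewrite /patch; case: ifP; first by rewrite inE.
  by move=> _; rewrite lee_fin => hx; apply/eqP; rewrite eq_le hx fun_ge0.
pose s := subr_max_nnsfun h c.
have ia0 : (0 <= a^-1)%R by rewrite invr_ge0 ltW.
pose k := scale_nnsfun s ia0.
have k_le : sintegral mu k <= \int[mu]_(x in D) f x.
  rewrite (ge0_integralE _ f0); apply: ereal_sup_ubound; exists k => //= x.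
  rewrite /patch; case: ifP => [/set_mem Dx|nDx].
    rewrite /k /= measurable_realfun.mindicE mem_set // mulr1.
    have := hD x Dx; move: (f0 x Dx); case: (f x) => [r r0|_ _|//]; last by rewrite leey.
    rewrite -EFinM -EFinD !lee_fin => hr.
    rewrite mulrC ler_pdivrMr // lerBlDr ge_max [(r * a)%R]mulrC hr /=.
    by rewrite lerDr mulr_ge0 // ltW.
  rewrite /k /= measurable_realfun.mindicE hnD; last by move/mem_set; rewrite nDx.
  by rewrite nDx mulr0 maxxx subrr mulr0.
have h_le_sc : sintegral mu h <= sintegral mu (add_nnsfun s c).
  by apply: le_sintegral => x /=; rewrite subrK le_max lexx.
apply: le_trans h_le_sc _; rewrite sintegralD // intc leeD2r //.
have -> : sintegral mu s = a%:E * sintegral mu k.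
  by rewrite -sintegralrM; apply: eq_sintegral => x /=; rewrite mulrA mulfV ?mul1r ?gt_eqF.
by rewrite lee_pmul2l ?lte_fin.
Qed.

Lemma le_integral_affine_nomeas D (mD : measurable D) f g (a B : R) :
  mu D = 1 -> (0 < a)%R -> (0 <= B)%R -> (forall x, D x -> 0 <= g x) ->
  (forall x, D x -> f x <= a%:E * g x + B%:E) ->
  \int[mu]_(x in D) f x <= a%:E * \int[mu]_(x in D) g x + B%:E.
Proof.
move=> muD1 a0 B0 g0 fg; apply: le_trans (le_integral_nomeas fg) _.
by apply: le_trans (ge0_integral_affine_le mD a0 B0 g0) _; rewrite muD1 mule1.
Qed.

End integral_le_nonmeasurable.

Section integral_bounded_perturbation.
Local Open Scope ereal_scope.
Context d (T : measurableType d) (R : realType) (P : probability T R).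

Lemma ge0_integral_le_bounded_perturbation (g : T -> \bar R) (xi : T -> R) (K C : R) :
  (forall x, 0 <= g x) -> (forall x, `|xi x| <= K)%R ->
  \int[P]_x (g x + (xi x)%:E) <= C%:E -> \int[P]_x g x <= (C + 2 * K)%:E.
Proof.
move=> g0 xiK intC; set h := fun x => g x + (xi x)%:E.
have K0 : (0 <= K)%R by apply: le_trans (xiK point).
have xi_ge x : (- K <= xi x)%R by have := xiK x; rewrite ler_norml => /andP[].
have hneg_le : \int[P]_x h^\- x <= K%:E.
  apply: le_trans (le_integral_affine_nomeas measurableT (probability_setT P)
    ltr01 K0 (fun x _ => lexx (cst 0 x)) _) _; last by rewrite integral0 mule0 add0e.
  move=> x _; rewrite /= mule0 add0e funenegE ge_max lee_fin K0 andbT leeNl /h.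
  by rewrite -[X in X <= _]add0e leeD // -EFinN lee_fin.
have hneg_fin : \int[P]_x h^\- x \is a fin_num.
  rewrite ge0_fin_numE ?(le_lt_trans hneg_le) ?ltry //.
  by apply: integral_ge0 => x _; exact: funeneg_ge0.
have hpos_le : \int[P]_x h^\+ x <= (C + K)%:E.
  move: intC; rewrite integralE leeBlDr // => /le_trans; apply.
  by rewrite EFinD leeD2l.
apply: le_trans (le_integral_affine_nomeas measurableT (probability_setT P)
  ltr01 K0 (fun x _ => funepos_ge0 h x) _) _.
  move=> x _; rewrite mul1e; apply: (@le_trans _ _ (h x + K%:E)).
    by rewrite /h -addeA leeDl // -EFinD lee_fin; have := xi_ge x; lra.
  by rewrite leeD2r // funeposE le_max lexx.
have -> : (C + 2 * K = C + K + K)%R by ring.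
by rewrite mul1e EFinD leeD2r.
Qed.

End integral_bounded_perturbation.

Theorem mainTheorem11 (R : realType) (d : nat) (d_gt0 : (0 < d)%N)
  (lam2 : R -> 'rV[R]_d -> R) (S2 : R -> 'rV[R]_d -> 'M[R]_d)
  (xi : Omega R d -> R)
  (* continuity of lambda_2 and Sbar_2 on [0,1] x R^d; Sbar_2 positive definite *)
  (lam2_cont : {within [set p : R * 'rV[R]_d | 0 <= p.1 <= 1],
                 continuous (fun p => lam2 p.1 p.2)})
  (S2_cont : {within [set p : R * 'rV[R]_d | 0 <= p.1 <= 1],
                 continuous (fun p => S2 p.1 p.2)})
  (lam2_pos : forall t x, 0 <= t <= 1 -> 0 < lam2 t x)
  (S2_pd : forall t x, 0 <= t <= 1 -> pd (S2 t x))
  (* assumption (R) *)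
  (bl bu M : R) (bl_gt0 : 0 < bl) (bl_le_bu : bl <= bu) (M_gt0 : 0 < M)
  (lam2_bnd : forall t x, 0 <= t <= 1 -> bl <= lam2 t x <= bu)
  (S2_bnd : forall t x, 0 <= t <= 1 -> psd (M%:M - S2 t x))
  (* xi bounded, Borel, continuous for the uniform topology *)
  (xi_bnd : exists K : R, forall w, `|xi w| <= K)
  (xi_meas : measurable_fun setT xi)
  (xi_cont : forall w (e : R), 0 < e -> exists2 del : R, 0 < del &
      forall w', (forall t, 0 <= t <= 1 -> `|Xp t w - Xp t w'| < del) ->
        `|xi w - xi w'| < e)
  (* the sequence (P^n) in \mathcal P, with densities Sigma^{P^n} *)
  (P : nat -> probability (Omega R d) R) (Sig : nat -> R -> Omega R d -> 'M[R]_d)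
  (P_in : forall n, inPclass (P n) (Sig n))
  (J_bnd : exists C : R, forall n, (Jcost lam2 S2 xi (P n) (Sig n) <= C%:E)%E) :
  exists C : R, forall n,
    (\int[P n]_w (\int[@lebesgue_measure R]_(t in `[0%R, 1%R])
        (xlogx (lam1 (S2 t (Xp t w)) (Sig n t w)))%:E) <= C%:E)%E.
Proof.
have [K xiK] := xi_bnd; have [C JC] := J_bnd.
set B := expR (2 * (ln bu + 1) - 1).
have B_ge0 : 0 <= B by exact/ltW/expR_gt0.
exists (2 * (C + 2 * K) + B) => n.
have [_ Sig_psd _ _] := P_in n.
set ell := fun t w => ell_tr (lam2 t (Xp t w)) (S2 t (Xp t w)) (Sig n t w).
set I := fun w => (\int[lebesgue_measure]_(t in `[0%R, 1%R]) ell t w)%E.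
have in01 t : [set` `[0%R, 1%R]] t -> 0 <= t <= 1 by rewrite /= in_itv.
have ell_ge0 w t : [set` `[0%R, 1%R]] t -> (0 <= ell t w)%E.
  move=> /in01 t01.
  exact (ell_tr_ge0 d_gt0 (lam2_pos _ _ t01) (S2_pd _ _ t01) (Sig_psd _ _ t01)).
have I_ge0 w : (0 <= I w)%E by apply: integral_ge0 => t /ell_ge0.
have leb01 : (@lebesgue_measure R `[0%R, 1%R] = 1)%E.
  by rewrite lebesgue_measure_itv /= lte_fin ltr01 oppr0 adde0.
have inner w : (\int[lebesgue_measure]_(t in `[0%R, 1%R])
    (xlogx (lam1 (S2 t (Xp t w)) (Sig n t w)))%:E <= 2%:E * I w + B%:E)%E.
  apply: le_integral_affine_nomeas leb01 (ltr0Sn _ 1) B_ge0 (ell_ge0 w) _ => //.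
  move=> t /in01 t01; have /andP[_ lam2_le] := lam2_bnd t (Xp t w) t01.
  exact (xlogx_lam1_le_ell_tr d_gt0 (lam2_pos _ _ t01) lam2_le (S2_pd _ _ t01)
    (Sig_psd _ _ t01)).
have intI : (\int[P n]_w I w <= (C + 2 * K)%:E)%E.
  exact: ge0_integral_le_bounded_perturbation I_ge0 xiK (JC n).
apply: le_trans (le_integral_affine_nomeas measurableT (probability_setT _)
  (ltr0Sn _ 1) B_ge0 (fun w _ => I_ge0 w) (fun w _ => inner w)) _.
by rewrite [leRHS]EFinD leeD2r // EFinM lee_pmul2l.
Qed.
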